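(* For every positive integer $n$, $k(n)\ge\sqrt{n}$.
   Context: A system on $n$ elements is a triple $(\mathcal{F},w,s)$ where $\mathcal{F}=(F_1,\dots,F_m)$ is a collection of subsets of $[n]$, $w\in[0,1]^m$ with $\sum_i w_i=1$, and $s\in[0,1]^{m\times m\times n}$ with $\sum_p s_{ijp}=1$ for all $i,j$. It is intersecting if $s_{ijp}>0$ implies $p\in F_i\cap F_j$. It is balanced if for all $p\in[n]$, $\sum_{i,j} w_iw_js_{ijp}=1/n$. Its cardinality is the size of the largest set in $\mathcal{F}$. $k(n)$ is the minimum $k$ such that there exists a balanced intersecting system on $n$ elements with cardinality $k$. *)

From HB Require Import structures.
From mathcomp Require Import all_boot all_order all_algebra.
From mathcomp Require Import reals.
Set Implicit Arguments. Unset Strict Implicit. Unset Printing Implicit Defensive.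
Import Order.TTheory GRing.Theory Num.Theory.
Local Open Scope ring_scope.

Section Systems.
Variable R : realType.

Definition is_system (n m : nat) (F : 'I_m -> {set 'I_n}) (w : 'I_m -> R)
    (s : 'I_m -> 'I_m -> 'I_n -> R) : Prop :=
  [/\ (forall i, 0 <= w i <= 1),
      \sum_(i < m) w i = 1,
      (forall i j p, 0 <= s i j p <= 1) &
      (forall i j, \sum_(p < n) s i j p = 1)].

Definition intersecting (n m : nat) (F : 'I_m -> {set 'I_n})
    (s : 'I_m -> 'I_m -> 'I_n -> R) : Prop :=
  forall i j p, 0 < s i j p -> p \in F i :&: F j.

Definition balanced (n m : nat) (w : 'I_m -> R)
    (s : 'I_m -> 'I_m -> 'I_n -> R) : Prop :=
  forall p : 'I_n, \sum_(i < m) \sum_(j < m) w i * w j * s i j p = n%:R^-1.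

End Systems.

Definition cardinality (n m : nat) (F : 'I_m -> {set 'I_n}) : nat :=
  \max_(i < m) #|F i|.

(** Let the coverage [a p] be the [w]-weight of the sets containing [p].
    Since [s] only charges points of [F i :&: F j] and [s <= 1], the mass
    [1/n] that a balanced system puts on [p] is at most [a p ^ 2], so
    [a p >= 1/sqrt n]. Summing over the [n] points,
    [sqrt n <= \sum_p a p = \sum_i w i * #|F i|], a convex combination of the
    sizes of the sets. *)

From HB Require Import structures.
From mathcomp Require Import all_boot all_order all_algebra.
From mathcomp Require Import reals.
Set Implicit Arguments. Unset Strict Implicit. Unset Printing Implicit Defensive.
Import Order.TTheory GRing.Theory Num.Theory.
Local Open Scope ring_scope.

Definition coverage (V : nmodType) (n m : nat) (F : 'I_m -> {set 'I_n})
    (w : 'I_m -> V) (p : 'I_n) : V :=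
  \sum_(i < m | p \in F i) w i.

Lemma sum_coverage (V : nmodType) (n m : nat) (F : 'I_m -> {set 'I_n})
    (w : 'I_m -> V) :
  \sum_(p < n) coverage F w p = \sum_(i < m) w i *+ #|F i|.
Proof.
rewrite (exchange_big_dep xpredT) //=; apply: eq_bigr => i _.
by rewrite -sumr_const; apply: eq_bigl => p.
Qed.

Lemma convex_card_le_cardinality (R : numDomainType) (n m : nat)
    (F : 'I_m -> {set 'I_n}) (w : 'I_m -> R) :
  (forall i, 0 <= w i) -> \sum_(i < m) w i = 1 ->
  \sum_(i < m) w i *+ #|F i| <= (cardinality F)%:R.
Proof.
move=> w_ge0 sum_w1.
have -> : (cardinality F)%:R = \sum_(i < m) w i * (cardinality F)%:R :> R.
  by rewrite -mulr_suml sum_w1 mul1r.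
apply: ler_sum => i _.
rewrite -[w i *+ _]mulr_natr; apply: ler_wpM2l => //; rewrite ler_nat.
exact: (leq_bigmax (F := fun i => #|F i|)).
Qed.

Lemma sqr_coverage (R : comPzSemiRingType) (n m : nat) (F : 'I_m -> {set 'I_n})
    (w : 'I_m -> R) (p : 'I_n) :
  coverage F w p ^+ 2 =
  \sum_(i < m) \sum_(j < m) (w i * w j) *+ (p \in F i :&: F j).
Proof.
rewrite expr2 /coverage big_distrlr /= big_mkcond; apply: eq_bigr => i _.
under [RHS]eq_bigr do rewrite in_setI.
case: (p \in F i) => /=; last by rewrite big1.
by rewrite big_mkcond; apply: eq_bigr => j _; case: (p \in F j).
Qed.

Lemma pair_mass_le_sqr_coverage (R : realType) (n m : nat)
    (F : 'I_m -> {set 'I_n}) (w : 'I_m -> R) (s : 'I_m -> 'I_m -> 'I_n -> R)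
    (p : 'I_n) :
  (forall i, 0 <= w i) -> (forall i j, s i j p <= 1) -> intersecting F s ->
  \sum_(i < m) \sum_(j < m) w i * w j * s i j p <= coverage F w p ^+ 2.
Proof.
move=> w_ge0 s_le1 hint; rewrite sqr_coverage.
apply: ler_sum => i _; apply: ler_sum => j _.
have ww_ge0 : 0 <= w i * w j by rewrite mulr_ge0.
have [s_gt0 | s_le0] := ltrP 0 (s i j p).
  by rewrite hint // ler_piMr.
by apply: (@le_trans _ _ 0); rewrite ?mulrn_wge0 ?mulr_ge0_le0.
Qed.

Lemma sqrtr_le_of_le_sqr (R : rcfType) (a x : R) :
  0 <= x -> a <= x ^+ 2 -> Num.sqrt a <= x.
Proof.
by move=> x_ge0 a_le; rewrite -[x]ger0_norm // -sqrtr_sqr ler_sqrt ?sqr_ge0.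
Qed.

Theorem proposition1 (R : realType) (n : nat) (hn : (0 < n)%N) (m : nat)
    (F : 'I_m -> {set 'I_n}) (w : 'I_m -> R) (s : 'I_m -> 'I_m -> 'I_n -> R) :
  is_system F w s -> intersecting F s -> balanced w s ->
  Num.sqrt (n%:R : R) <= (cardinality F)%:R.
Proof.
move=> [w01 sum_w1 s01 _] hint hbal.
have w_ge0 i : 0 <= w i by case/andP: (w01 i).
have s_le1 i j p : s i j p <= 1 by case/andP: (s01 i j p).
have coverage_ge p : Num.sqrt n%:R^-1 <= coverage F w p.
  apply: sqrtr_le_of_le_sqr; first by apply: sumr_ge0 => i _; apply: w_ge0.
  by rewrite -(hbal p); apply: pair_mass_le_sqr_coverage.
have sqrt_n : Num.sqrt (n%:R : R) = \sum_(p < n) Num.sqrt n%:R^-1.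
  set r := Num.sqrt (n%:R : R).
  have r_gt0 : 0 < r by rewrite sqrtr_gt0 ltr0n.
  rewrite sumr_const card_ord sqrtrV ?ler0n // -/r -[_ *+ n]mulr_natl.
  by rewrite -(sqr_sqrtr (ler0n R n)) -/r expr2 mulfK ?gt_eqF.
rewrite sqrt_n; apply: le_trans (convex_card_le_cardinality F w_ge0 sum_w1).
by rewrite -sum_coverage; apply: ler_sum => p _.
Qed.
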